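(* Let $(V,E)$ be a digraph with $V$ countably infinite, $\mu_1,\mu_2$ probability measures on $V$, and $Q$ a finitely decomposable acyclic flow on $(V,E)$ with $\operatorname{div}Q=\mu_1-\mu_2$. Then there exists a coupling $\rho$ between $\mu_1$ and $\mu_2$ such that $\rho(x,y)=0$ whenever there is no directed path from $x$ to $y$ in the digraph $(V,E(Q))$.
   Context: A flow on $(V,E)$ is a map $Q:E\to[0,+\infty)$, with $\operatorname{div}Q(x)=\sum_{y:(x,y)\in E}Q(x,y)-\sum_{y:(y,x)\in E}Q(y,x)$. $E(Q)=\{e\in E:Q(e)>0\}$; $Q$ is acyclic if $(V,E(Q))$ has no directed cycle. For a directed path $\gamma=(x_0,\dots,x_n)$, $Q_\gamma(x,y)=1$ if $(x,y)=(x_i,x_{i+1})$ for some $i$, $0$ otherwise. $Q$ is finitely decomposable if $Q=\sum_nq_nQ_{\gamma_n}$ pointwise for a countable family of finite self-avoiding directed paths $\gamma_n$ and weights $q_n\ge0$ with $\sum_nq_n<\infty$. A coupling is a probability measure on $V\times V$ with marginals $\mu_1,\mu_2$. A path of length zero from $x$ to $x$ is allowed. *)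

From Stdlib Require Import Reals List Relations ClassicalDescription.
Open Scope R_scope.
Set Implicit Arguments.

Section Defs.
Variable V : Type.

(* V is countably infinite: e : nat -> V is a bijection. *)
Definition enumeration (e : nat -> V) : Prop :=
  (forall v : V, exists n, e n = v) /\ (forall n m, e n = e m -> n = m).

(* Sum over V of a family g : V -> R along the enumeration e.
   All families summed below are nonnegative, so the value is independent
   of the chosen enumeration. *)
Definition sumV (e : nat -> V) (g : V -> R) (s : R) : Prop :=
  infinite_sum (fun n => g (e n)) s.

Definition is_prob (e : nat -> V) (mu : V -> R) : Prop :=
  (forall x, 0 <= mu x) /\ sumV e mu 1.

Definition is_flow (E : V -> V -> Prop) (Q : V -> V -> R) : Prop :=
  (forall x y, 0 <= Q x y) /\ (forall x y, ~ E x y -> Q x y = 0).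

Definition EQ (Q : V -> V -> R) (x y : V) : Prop := 0 < Q x y.

Definition div_eq (e : nat -> V) (Q : V -> V -> R) (mu1 mu2 : V -> R) : Prop :=
  forall x, exists out inn,
    sumV e (fun y => Q x y) out /\ sumV e (fun y => Q y x) inn /\
    out - inn = mu1 x - mu2 x.

Definition acyclic (Q : V -> V -> R) : Prop :=
  forall x, ~ clos_trans V (EQ Q) x x.

Fixpoint is_dpath (E : V -> V -> Prop) (l : list V) : Prop :=
  match l with
  | x :: ((y :: _) as t) => E x y /\ is_dpath E t
  | _ => True
  end.

Definition path_edge (l : list V) (x y : V) : Prop :=
  exists l1 l2, l = l1 ++ x :: y :: l2.

Definition indic (P : Prop) : R :=
  if excluded_middle_informative P then 1 else 0.

Definition Qpath (l : list V) (x y : V) : R := indic (path_edge l x y).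

(* Finitely decomposable: Q = sum_n q_n Q_{gamma_n} pointwise, gamma_n finite
   self-avoiding directed paths, q_n >= 0, sum q_n < oo.  A finite family is
   padded with zero weights. *)
Definition finitely_decomposable (E : V -> V -> Prop) (Q : V -> V -> R) : Prop :=
  exists (gam : nat -> list V) (q : nat -> R),
    (forall n, 0 <= q n) /\
    (exists S, infinite_sum q S) /\
    (forall n, is_dpath E (gam n) /\ NoDup (gam n)) /\
    (forall x y, infinite_sum (fun n => q n * Qpath (gam n) x y) (Q x y)).

Definition coupling (e : nat -> V) (rho : V -> V -> R) (mu1 mu2 : V -> R) : Prop :=
  (forall x y, 0 <= rho x y) /\
  (forall x, sumV e (fun y => rho x y) (mu1 x)) /\
  (forall y, sumV e (fun x => rho x y) (mu2 y)).

End Defs.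

(* Write Q = sum_n q_n Q_{gam_n} and let start_mass x and end_mass x be the total
   weight of the paths starting, resp. ending, at x.  Counting the paths through x
   once by the edge leaving x and once by the edge entering x turns
   div Q = mu1 - mu2 into mu1 + end_mass = mu2 + start_mass =: lam.
   Now transport mass: mu1 x starts at x; of the mass arriving at a vertex z the
   fraction mu2 z / lam z is absorbed and the rest is sent along the paths starting
   at z, path gam_n receiving the fraction q_n / lam z, to their end points.  By
   induction the total mass ever arriving at z is at most lam z, so at most mu2 z is
   absorbed at z; since sum_z lam z <= 1 + sum_n q_n < oo, the mass in transit tends
   to 0 and all of mu1 x is absorbed.  The mass started at x and absorbed at z is a
   coupling (its column sums are <= mu2 and have total 1) supported on pairs
   connected in E(Q). *)

From Pilot Require Import Defs.
From Stdlib Require Import Reals List Relations ClassicalDescription.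
Open Scope R_scope.
Set Implicit Arguments.
Unset Strict Implicit.

Section SelfAvoidingPaths.
Variable V : Type.
Import ListNotations.

Definition starts_at (g : list V) (x : V) : Prop := exists l, g = x :: l.
Definition ends_at (g : list V) (x : V) : Prop := exists l, g = l ++ [x].

Lemma NoDup_app_cons_inj (g : list V) x l1 r1 l2 r2 : NoDup g ->
  g = l1 ++ x :: r1 -> g = l2 ++ x :: r2 -> l1 = l2 /\ r1 = r2.
Proof.
intros ND -> E. revert l2 E ND.
induction l1 as [|a l1 IH]; intros [|b l2] E ND; simpl in *.
- now injection E as ->.
- injection E as -> ->. inversion_clear ND as [|? ? b_notin _].
  exfalso. apply b_notin, in_or_app. right. now left.
- injection E as -> <-. inversion_clear ND as [|? ? x_notin _].
  exfalso. apply x_notin, in_or_app. right. now left.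
- injection E as -> E. inversion_clear ND as [|? ? _ ND'].
  now destruct (IH l2 E ND') as [-> ->].
Qed.

Lemma path_edge_succ_uniq (g : list V) x y1 y2 : NoDup g ->
  path_edge g x y1 -> path_edge g x y2 -> y1 = y2.
Proof.
intros ND [l1 [r1 E1]] [l2 [r2 E2]].
destruct (NoDup_app_cons_inj ND E1 E2) as [_ H]. now inversion H.
Qed.

Lemma path_edge_pred_uniq (g : list V) x y1 y2 : NoDup g ->
  path_edge g y1 x -> path_edge g y2 x -> y1 = y2.
Proof.
intros ND [l1 [r1 E1]] [l2 [r2 E2]].
assert (E1' : g = (l1 ++ [y1]) ++ x :: r1) by now rewrite <- app_assoc.
assert (E2' : g = (l2 ++ [y2]) ++ x :: r2) by now rewrite <- app_assoc.
destruct (NoDup_app_cons_inj ND E1' E2') as [H _].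
now apply app_inj_tail in H.
Qed.

Lemma starts_at_uniq (g : list V) x y : starts_at g x -> starts_at g y -> x = y.
Proof. intros [l1 ->] [l2 E]. now inversion E. Qed.

Lemma ends_at_uniq (g : list V) x y : ends_at g x -> ends_at g y -> x = y.
Proof. intros [l1 ->] [l2 E]. now apply app_inj_tail in E. Qed.

Lemma ex_ends_at (g : list V) : (exists x, ends_at g x) <-> g <> [].
Proof.
split.
- intros [x [l ->]]. now destruct l.
- intros Hg. destruct (exists_last Hg) as [l [x E]]. now exists x, l.
Qed.

Lemma out_edge_or_end_iff_In (g : list V) x :
  (exists y, path_edge g x y) \/ ends_at g x <-> In x g.
Proof.
split.
- intros [[y [l1 [l2 ->]]]|[l ->]]; apply in_or_app; simpl; auto.
- intros H. destruct (in_split x g H) as [l1 [[|y l2] ->]].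
  + right. now exists l1.
  + left. now exists y, l1, l2.
Qed.

Lemma out_edge_end_disjoint (g : list V) x : NoDup g ->
  ~ ((exists y, path_edge g x y) /\ ends_at g x).
Proof.
intros ND [[y [l1 [l2 E1]]] [l3 E3]].
destruct (@exists_last _ (y :: l2)) as [l4 [z E4]]; [discriminate|].
assert (E : (l1 ++ x :: l4) ++ [z] = l3 ++ [x]).
{ rewrite <- E3, E1, <- app_assoc. simpl. now rewrite <- E4. }
apply app_inj_tail in E. destruct E as [_ ->].
rewrite E1 in ND. apply NoDup_remove_2 in ND. apply ND.
apply in_or_app. right. rewrite E4. apply in_or_app. simpl; auto.
Qed.

Lemma in_edge_or_start_iff_In (g : list V) x :
  (exists y, path_edge g y x) \/ starts_at g x <-> In x g.
Proof.
split.
- intros [[y [l1 [l2 ->]]]|[l ->]]; [apply in_or_app; simpl|simpl]; auto.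
- intros H. destruct (in_split x g H) as [l1 [l2 ->]].
  destruct (rev l1) as [|y l1'] eqn:E.
  + right. exists l2. apply (f_equal (@rev V)) in E.
    rewrite rev_involutive in E. now subst.
  + left. exists y, (rev l1'), l2.
    rewrite <- (rev_involutive l1), E. simpl. now rewrite <- app_assoc.
Qed.

Lemma in_edge_start_disjoint (g : list V) x : NoDup g ->
  ~ ((exists y, path_edge g y x) /\ starts_at g x).
Proof.
intros ND [[y [l1 [l2 E1]]] [l ->]].
inversion_clear ND as [|? ? x_notin _]. apply x_notin.
destruct l1 as [|a l1]; injection E1 as -> ->; [now left|].
apply in_or_app. right. right. now left.
Qed.

Lemma path_edges_clos_refl_trans (P : V -> V -> Prop) (l : list V) s y :
  (forall a b, path_edge (s :: l) a b -> P a b) -> ends_at (s :: l) y ->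
  clos_refl_trans V P s y.
Proof.
revert s. induction l as [|b l IH]; intros s HP [l0 E].
- destruct l0 as [|c l0]; inversion E; subst; [apply rt_refl|now destruct l0].
- apply rt_trans with b.
  + apply rt_step, HP. now exists [], l.
  + apply IH.
    * intros a c [l1 [l2 E']]. apply HP. exists (s :: l1), l2. now rewrite E'.
    * destruct l0 as [|c l0]; simpl in E; inversion E; subst.
      now exists l0.
Qed.

End SelfAvoidingPaths.

From mathcomp Require Import all_boot all_order all_algebra.
From mathcomp Require Import all_classical all_reals all_analysis.
From mathcomp Require Import Rstruct Rstruct_topology lra ring.
Import Order.TTheory GRing.Theory Num.Theory.
Import numFieldNormedType.Exports.
Local Open Scope ring_scope.
Local Open Scope ereal_scope.

Lemma indic_true (P : Prop) : P -> Defs.indic P = 1%R.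
Proof. by rewrite /Defs.indic; case: excluded_middle_informative. Qed.

Lemma indic_false (P : Prop) : ~ P -> Defs.indic P = 0%R.
Proof. by rewrite /Defs.indic; case: excluded_middle_informative. Qed.

Lemma indic_ge0 (P : Prop) : (0 <= Defs.indic P)%R.
Proof. by rewrite /Defs.indic; case: excluded_middle_informative; rewrite ?R1E ?R0E. Qed.

Lemma indic_le1 (P : Prop) : (Defs.indic P <= 1)%R.
Proof. by rewrite /Defs.indic; case: excluded_middle_informative; rewrite ?R1E ?R0E. Qed.

Lemma indic_disjoint_add (P1 P2 P : Prop) : (P1 \/ P2 <-> P) -> ~ (P1 /\ P2) ->
  (Defs.indic P1 + Defs.indic P2 = Defs.indic P)%R.
Proof.
move=> P12 disj; have [p1|np1] := pselect P1; have [p2|np2] := pselect P2.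
- by case: disj.
- rewrite (indic_true p1) (indic_false np2) (indic_true (_ : P)) ?addr0 //.
  by apply/P12; left.
- rewrite (indic_false np1) (indic_true p2) (indic_true (_ : P)) ?add0r //.
  by apply/P12; right.
- by rewrite !indic_false ?addr0 // => /P12 [].
Qed.

Lemma infinite_sum_cvgE (f : nat -> R) s :
  infinite_sum f s <-> (series f @ \oo --> s)%classic.
Proof.
rewrite (@cvgrPdist_lt _ R^o); split.
- move=> fs eps /RltP eps0; have [N HN] := fs eps eps0.
  exists N.+1 => // -[|n] //= Nn.
  rewrite /series /= -sum_f_R0E -RabsE Rabs_minus_sym; apply/RltP; apply: HN.
  by apply/ssrnat.leP.
- move=> fs eps /RltP eps0; have [N _ HN] := fs eps eps0.
  exists N => n /ssrnat.leP Nn; rewrite /R_dist sum_f_R0E Rabs_minus_sym RabsE.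
  by apply/RltP; apply: HN => /=; apply: leq_trans Nn _.
Qed.

Lemma infinite_sum_nneseriesE (f : nat -> R) s : (forall n, 0 <= f n)%R ->
  infinite_sum f s <-> \sum_(j <oo) (f j)%:E = s%:E.
Proof.
move=> f0; have seriesE : (fun n => \sum_(0 <= j < n) (f j)%:E) = EFin \o series f.
  by apply/funext => n; rewrite /= sumEFin.
rewrite infinite_sum_cvgE; split => [fs|fs].
- rewrite seriesE EFin_lim; first by congr EFin; apply: cvg_lim.
  by apply/cvg_ex; exists s.
- have cv : cvgn (series f) by apply: nnseries_is_cvg => //; rewrite fs ltry.
  by move: fs; rewrite seriesE EFin_lim // => -[<-].
Qed.

Lemma infinite_sum_nneseries (f : nat -> R) s : (forall n, Rle 0 (f n)) ->
  infinite_sum f s -> \sum_(j <oo) (f j)%:E = s%:E.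
Proof.
move=> f0; have f0' n : (0 <= f n)%R by apply/RleP.
by move/(infinite_sum_nneseriesE _ f0').
Qed.

Lemma eseries_neq0 (f : nat -> \bar R) :
  \sum_(k <oo) f k <> 0 -> exists k, f k <> 0.
Proof.
move=> f_neq0; apply: contrapT => f0; apply: f_neq0.
by apply: eseries0 => k _ _; apply: contrapT => fk; apply: f0; exists k.
Qed.

Section NonnegativeSeries.
Variable f : nat -> \bar R.
Hypothesis f_ge0 : forall k, 0 <= f k.

Lemma nneseries_ge_term j : f j <= \sum_(k <oo) f k.
Proof.
rewrite (@nneseriesD1 _ f j xpredT) //; apply: leeDl.
exact: nneseries_ge0.
Qed.

Lemma nneseries_delta j : (forall k, k <> j -> f k = 0) -> \sum_(k <oo) f k = f j.
Proof.
move=> fj; rewrite (@nneseriesD1 _ f j xpredT) // eseries0 ?adde0 //.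
by move=> k _ /andP[_ /eqP]; exact: fj.
Qed.

Lemma nneseries_le_of_partial c :
  (forall N, \sum_(k < N) f k <= c) -> \sum_(k <oo) f k <= c.
Proof.
move=> fc; apply: lime_le; first exact: is_cvg_nneseries.
by apply: nearW => N; rewrite big_mkord.
Qed.

Lemma lb_summable_terms_le0 c : \sum_(k <oo) f k < +oo ->
  (forall N, c <= f N) -> c <= 0.
Proof.
move=> f_fin cf; have tail0 := nneseries_tail_cvg f_fin (fun k _ => f_ge0 k).
rewrite -(cvg_lim _ tail0) //; apply: lime_ge; first by apply/cvg_ex; exists 0.
apply: nearW => N; apply: le_trans (cf N) _.
by have := @nneseries_lim_ge _ f xpredT N N.+1 (fun k _ _ => f_ge0 k); rewrite big_nat1.
Qed.

End NonnegativeSeries.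

Section CountableSums.
Variables (V : Type) (e : nat -> V).
Hypothesis e_enum : enumeration e.

Definition Vsum (f : V -> \bar R) := \sum_(j <oo) f (e j).

Lemma Vsum_ge0 f : (forall z, 0 <= f z) -> 0 <= Vsum f.
Proof. by move=> f0; apply: nneseries_ge0. Qed.

Lemma Vsum_ge_term f v : (forall z, 0 <= f z) -> f v <= Vsum f.
Proof. by move=> f0; have [j <-] := proj1 e_enum v; exact: nneseries_ge_term. Qed.

Lemma Vsum_delta f v : (forall z, 0 <= f z) -> (forall z, z <> v -> f z = 0) ->
  Vsum f = f v.
Proof.
move=> f0 fv; have [j ej] := proj1 e_enum v.
rewrite /Vsum (@nneseries_delta _ _ j) ?ej // => k kj; apply: fv => ekv.
by apply: kj; apply: (proj2 e_enum); rewrite ej.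
Qed.

Lemma Vsum_nneseries (a : V -> nat -> \bar R) : (forall x n, 0 <= a x n) ->
  Vsum (fun x => \sum_(n <oo) a x n) = \sum_(n <oo) Vsum (fun x => a x n).
Proof. by move=> a0; rewrite /Vsum nneseries_interchange. Qed.

Lemma Vsum_comm (a : V -> V -> \bar R) : (forall x z, 0 <= a x z) ->
  Vsum (fun x => Vsum (a x)) = Vsum (fun z => Vsum (a^~ z)).
Proof. by move=> a0; rewrite Vsum_nneseries. Qed.

Lemma VsumZl (c : R) f : (forall z, 0 <= f z) ->
  Vsum (fun z => c%:E * f z) = c%:E * Vsum f.
Proof. by move=> f0; rewrite /Vsum nneseriesZl. Qed.

Lemma VsumD f g : (forall z, 0 <= f z) -> (forall z, 0 <= g z) ->
  Vsum (fun z => f z + g z) = Vsum f + Vsum g.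
Proof. by move=> f0 g0; rewrite /Vsum nneseriesD. Qed.

Lemma lee_Vsum f g : (forall z, 0 <= f z) -> (forall z, f z <= g z) ->
  Vsum f <= Vsum g.
Proof. by move=> f0 fg; apply: lee_nneseries. Qed.

Lemma Vsum_indic_at (P : V -> Prop) (f : V -> R) z0 : (forall z, 0 <= f z)%R ->
  (forall z1 z2, P z1 -> P z2 -> z1 = z2) -> P z0 ->
  Vsum (fun z => (Defs.indic (P z) * f z)%:E) = (f z0)%:E.
Proof.
move=> f0 Puniq Pz0; rewrite (@Vsum_delta _ z0).
- by rewrite indic_true // mul1r.
- by move=> z; rewrite lee_fin mulr_ge0 ?indic_ge0.
- by move=> z zz0; rewrite indic_false ?mul0r // => Pz; apply: zz0; exact: Puniq.
Qed.

Lemma Vsum_indic (P : V -> Prop) (w : R) : (0 <= w)%R ->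
  (forall z1 z2, P z1 -> P z2 -> z1 = z2) ->
  Vsum (fun z => (Defs.indic (P z) * w)%:E) = (Defs.indic (exists z, P z) * w)%:E.
Proof.
move=> w0 Puniq; have [[z0 Pz0]|nP] := pselect (exists z, P z).
  by rewrite indic_true ?mul1r; [exact: Vsum_indic_at Pz0|exists z0].
rewrite indic_false // mul0r; apply: eseries0 => k _ _.
by rewrite indic_false ?mul0r // => Pk; apply: nP; exists (e k).
Qed.

Lemma Vsum_le_eq (a : V -> \bar R) (b : V -> R) : (forall z, 0 <= a z) ->
  (forall z, a z <= (b z)%:E) -> Vsum a = Vsum (fun z => (b z)%:E) ->
  Vsum (fun z => (b z)%:E) \is a fin_num -> forall z, a z = (b z)%:E.
Proof.
move=> a0 ab Eab bfin.
have afin z : a z \is a fin_num.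
  by rewrite ge0_fin_numE ?a0 //; apply: le_lt_trans (ab z) (ltry _).
pose d z := (b z)%:E - a z.
have d0 z : 0 <= d z by rewrite /d suber_ge0.
have bE : (fun z => (b z)%:E) = fun z => a z + d z.
  by apply: funext => z; rewrite /d addeC subeK.
have Vsum_afin : Vsum a \is a fin_num by rewrite Eab.
have Vsum_d0 : Vsum d = 0.
  move: Eab; rewrite bE VsumD // => E.
  have := addeK (Vsum d) Vsum_afin.
  by rewrite [Vsum d + _]addeC -E subee.
move=> z; have : d z <= 0 by rewrite -Vsum_d0; exact: Vsum_ge_term.
move=> dz; have dz0 : d z = 0 by apply/eqP; rewrite eq_le dz d0.
by rewrite (congr1 (fun f => f z) bE) /= dz0 adde0.
Qed.

End CountableSums.

Section MassTransport.
Variables (V : Type) (e : nat -> V).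
Hypothesis e_enum : enumeration e.
Variables (mu1 mu2 : V -> R) (Q : V -> V -> R).
Hypothesis mu1_ge0 : forall x, (0 <= mu1 x)%R.
Hypothesis mu2_ge0 : forall x, (0 <= mu2 x)%R.
Hypothesis mu1_sum : Vsum e (fun x => (mu1 x)%:E) = 1.
Hypothesis mu2_sum : Vsum e (fun x => (mu2 x)%:E) = 1.
Variables (gam : nat -> list V) (q : nat -> R).
Hypothesis q_ge0 : forall n, (0 <= q n)%R.
Hypothesis q_summable : \sum_(n <oo) (q n)%:E < +oo.
Hypothesis gam_NoDup : forall n, NoDup (gam n).
Hypothesis Q_decomp : forall x y,
  \sum_(n <oo) (q n * Qpath (gam n) x y)%:E = (Q x y)%:E.
Hypothesis div_Q : forall x, exists out inn,
  Vsum e (fun y => (Q x y)%:E) = out%:E /\ Vsum e (fun y => (Q y x)%:E) = inn%:E /\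
  (out - inn = mu1 x - mu2 x)%R.

Local Notation Vsum := (Vsum e).

Definition qweight (P : nat -> Prop) := \sum_(n <oo) (q n * Defs.indic (P n))%:E.

Lemma qweight_term_ge0 (P : Prop) n : 0 <= (q n * Defs.indic P)%:E.
Proof. by rewrite lee_fin mulr_ge0 ?indic_ge0. Qed.

Lemma qweight_ge0 P : 0 <= qweight P.
Proof. by apply: nneseries_ge0 => n _ _; exact: qweight_term_ge0. Qed.

Lemma qweight_le P : qweight P <= \sum_(n <oo) (q n)%:E.
Proof.
apply: lee_nneseries => [n _ _|n _]; first exact: qweight_term_ge0.
by rewrite lee_fin ler_piMr ?indic_le1.
Qed.

Lemma qweight_fin P : qweight P \is a fin_num.
Proof.
by rewrite ge0_fin_numE ?qweight_ge0 //; apply: le_lt_trans (qweight_le P) _.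
Qed.

Lemma qweight_disjoint_add (P1 P2 P : nat -> Prop) :
  (forall n, P1 n \/ P2 n <-> P n) -> (forall n, ~ (P1 n /\ P2 n)) ->
  qweight P1 + qweight P2 = qweight P.
Proof.
move=> P12 disj; rewrite -nneseriesD; [|by move=> *; exact: qweight_term_ge0..].
by apply: eq_eseriesr => n _; rewrite -EFinD -mulrDr (indic_disjoint_add (P12 n) (disj n)).
Qed.

Lemma Vsum_qweight (P : nat -> V -> Prop) :
  (forall n y1 y2, P n y1 -> P n y2 -> y1 = y2) ->
  Vsum (fun y => qweight (P^~ y)) = qweight (fun n => exists y, P n y).
Proof.
move=> Puniq; rewrite Vsum_nneseries => [|y n]; last exact: qweight_term_ge0.
apply: eq_eseriesr => n _.
have -> : (fun y => (q n * Defs.indic (P n y))%:E) =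
          (fun y => (Defs.indic (P n y) * q n)%:E) by apply: funext => y; rewrite mulrC.
by rewrite (Vsum_indic e_enum (q_ge0 n)) 1?mulrC //; exact: Puniq.
Qed.

Lemma Q_qweight x y : (Q x y)%:E = qweight (fun n => path_edge (gam n) x y).
Proof. by rewrite -Q_decomp. Qed.

Lemma Q_ge_term x y n : (q n * Qpath (gam n) x y <= Q x y)%R.
Proof.
by rewrite -lee_fin -Q_decomp; apply: nneseries_ge_term => k; exact: qweight_term_ge0.
Qed.

Lemma outflowE x :
  Vsum (fun y => (Q x y)%:E) = qweight (fun n => exists y, path_edge (gam n) x y).
Proof.
have -> : (fun y => (Q x y)%:E) = fun y => qweight (fun n => path_edge (gam n) x y).
  by apply: funext => y; exact: Q_qweight.
apply: (@Vsum_qweight (fun n y => path_edge (gam n) x y)) => n y1 y2.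
exact: path_edge_succ_uniq (gam_NoDup n).
Qed.

Lemma inflowE x :
  Vsum (fun y => (Q y x)%:E) = qweight (fun n => exists y, path_edge (gam n) y x).
Proof.
have -> : (fun y => (Q y x)%:E) = fun y => qweight (fun n => path_edge (gam n) y x).
  by apply: funext => y; exact: Q_qweight.
apply: (@Vsum_qweight (fun n y => path_edge (gam n) y x)) => n y1 y2.
exact: path_edge_pred_uniq (gam_NoDup n).
Qed.

Definition start_mass x := fine (qweight (fun n => starts_at (gam n) x)).
Definition end_mass x := fine (qweight (fun n => ends_at (gam n) x)).

Lemma start_massE x : (start_mass x)%:E = qweight (fun n => starts_at (gam n) x).
Proof. by rewrite fineK ?qweight_fin. Qed.

Lemma end_massE x : (end_mass x)%:E = qweight (fun n => ends_at (gam n) x).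
Proof. by rewrite fineK ?qweight_fin. Qed.

Lemma start_mass_ge0 x : (0 <= start_mass x)%R.
Proof. by rewrite -lee_fin start_massE qweight_ge0. Qed.

Lemma end_mass_ge0 x : (0 <= end_mass x)%R.
Proof. by rewrite -lee_fin end_massE qweight_ge0. Qed.

(* Both sides are the weight of the paths through x, counted by the edge leaving x
   (or x being the end) and by the edge entering x (or x being the start). *)
Lemma mass_balance x : (mu1 x + end_mass x = mu2 x + start_mass x)%R.
Proof.
have [out [inn [Hout [Hin Hdiv]]]] := div_Q x.
have through_out : out%:E + (end_mass x)%:E = qweight (fun n => In x (gam n)).
  rewrite -Hout outflowE end_massE; apply: qweight_disjoint_add => n.
    exact: out_edge_or_end_iff_In.
  exact: out_edge_end_disjoint (gam_NoDup n).
have through_in : inn%:E + (start_mass x)%:E = qweight (fun n => In x (gam n)).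
  rewrite -Hin inflowE start_massE; apply: qweight_disjoint_add => n.
    exact: in_edge_or_start_iff_In.
  exact: in_edge_start_disjoint (gam_NoDup n).
move: through_out; rewrite -through_in -!EFinD => -[]; lra.
Qed.

Definition lam x := (mu1 x + end_mass x)%R.

Lemma lam_ge0 x : (0 <= lam x)%R.
Proof. by rewrite addr_ge0 ?end_mass_ge0. Qed.

Lemma lamE x : lam x = (mu2 x + start_mass x)%R.
Proof. exact: mass_balance. Qed.

Lemma Vsum_lam_le : Vsum (fun x => (lam x)%:E) <= 1 + \sum_(n <oo) (q n)%:E.
Proof.
rewrite (_ : (fun x => _) = fun x => (mu1 x)%:E + (end_mass x)%:E); last first.
  by apply: funext => x; rewrite EFinD.
rewrite VsumD => [||x]; rewrite ?lee_fin ?end_mass_ge0 // mu1_sum leeD2l //.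
under eq_fun do rewrite end_massE.
rewrite (@Vsum_qweight (fun n z => ends_at (gam n) z)); first exact: qweight_le.
by move=> n z1 z2; exact: ends_at_uniq.
Qed.

(* Mass at [src n] is sent along [gam n] at rate [q n / lam (src n)]; the junk
   values [src n] of the empty path and [_ / 0 = 0] are harmless, since an empty
   path ends nowhere and no mass reaches a vertex with [lam = 0]. *)
Definition src n := hd (e 0%N) (gam n).

Definition jump n z := (q n * Defs.indic (ends_at (gam n) z) / lam (src n))%R.

Lemma jump_ge0 n z : (0 <= jump n z)%R.
Proof. by rewrite !mulr_ge0 ?indic_ge0 ?invr_ge0 ?lam_ge0. Qed.

(* [arrive k x z] is the mass started at x that reaches z with its k-th jump. *)
Fixpoint arrive k x z :=
  match k with
  | 0%N => (mu1 x * Defs.indic (x = z))%:E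
  | k.+1 => \sum_(n <oo) (jump n z)%:E * arrive k x (src n)
  end.

Lemma arrive_ge0 k x z : 0 <= arrive k x z.
Proof.
elim: k z => [|k IH] z /=; first by rewrite lee_fin mulr_ge0 ?indic_ge0.
by apply: nneseries_ge0 => n _ _; rewrite mule_ge0 ?lee_fin ?jump_ge0.
Qed.

Definition arrived k z := Vsum (fun x => arrive k x z).

Lemma arrived_ge0 k z : 0 <= arrived k z.
Proof. exact: Vsum_ge0 (arrive_ge0 k ^~ z). Qed.

Lemma arrived0 z : arrived 0 z = (mu1 z)%:E.
Proof.
rewrite /arrived (@Vsum_delta _ _ e_enum _ z) => [|x|x xz] /=.
- by rewrite indic_true // mulr1.
- exact: arrive_ge0 0%N x z.
- by rewrite indic_false // mulr0.
Qed.

Lemma arrivedS k z : arrived k.+1 z = \sum_(n <oo) (jump n z)%:E * arrived k (src n).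
Proof.
rewrite /arrived /= Vsum_nneseries => [|x n]; last first.
  by rewrite mule_ge0 ?lee_fin ?jump_ge0 ?arrive_ge0.
by apply: eq_eseriesr => n _; rewrite VsumZl // => x; exact: arrive_ge0.
Qed.

(* Induction on N: what arrives at z is the initial mass mu1 z plus what comes
   in along paths ending at z, and each such path carries at most q n. *)
Lemma arrived_partial_le N z : \sum_(k < N) arrived k z <= (lam z)%:E.
Proof.
elim: N z => [|N IH] z; first by rewrite big_ord0 lee_fin lam_ge0.
rewrite big_ord_recl arrived0 /= /lam EFinD leeD2l // end_massE.
under eq_bigr do rewrite arrivedS.
rewrite -nneseries_sum => [|i n _]; last first.
  by rewrite mule_ge0 ?lee_fin ?jump_ge0 ?arrived_ge0.
apply: lee_nneseries => [n _ _|n _].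
  by apply: sume_ge0 => i _; rewrite mule_ge0 ?lee_fin ?jump_ge0 ?arrived_ge0.
rewrite -ge0_sume_distrr => [|i _]; last exact: arrived_ge0.
have [lam0|lam_neq0] := eqVneq (lam (src n)) 0%R.
  by rewrite /jump lam0 invr0 mulr0 mul0e qweight_term_ge0.
apply: le_trans (lee_wpmul2l _ (IH (src n))) _; first by rewrite lee_fin jump_ge0.
by rewrite -EFinM /jump divfK.
Qed.

Lemma arrived_total_le z : \sum_(k <oo) arrived k z <= (lam z)%:E.
Proof.
by apply: nneseries_le_of_partial => [k|N]; [exact: arrived_ge0|exact: arrived_partial_le].
Qed.

Lemma arrive_total_le x z : \sum_(k <oo) arrive k x z <= (lam z)%:E.
Proof.
apply: le_trans (arrived_total_le z); apply: lee_nneseries => [k _ _|k _].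
  exact: arrive_ge0.
exact: Vsum_ge_term (arrive_ge0 k ^~ z).
Qed.

Lemma arrive_le k x z : arrive k x z <= (lam z)%:E.
Proof.
exact: le_trans (nneseries_ge_term (fun k => arrive_ge0 k x z) k) (arrive_total_le x z).
Qed.

Definition arriveR k x z := fine (arrive k x z).

Lemma arriveRE k x z : arrive k x z = (arriveR k x z)%:E.
Proof.
rewrite fineK // ge0_fin_numE ?arrive_ge0 //.
exact: le_lt_trans (arrive_le k x z) (ltry _).
Qed.

Lemma arriveR_ge0 k x z : (0 <= arriveR k x z)%R.
Proof. by rewrite -lee_fin -arriveRE arrive_ge0. Qed.

Lemma arriveR_lam0 k x z : lam z = 0%R -> arriveR k x z = 0%R.
Proof.
move=> lam0; apply/eqP; rewrite eq_le arriveR_ge0 andbT -lam0 -lee_fin -arriveRE.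
exact: arrive_le.
Qed.

Definition absorb_rate z := (mu2 z / lam z)%R.

Lemma absorb_rate_ge0 z : (0 <= absorb_rate z)%R.
Proof. by rewrite divr_ge0 ?lam_ge0. Qed.

Definition transit k x := Vsum (fun z => arrive k x z).
Definition absorbed k x := Vsum (fun z => (absorb_rate z)%:E * arrive k x z).
Definition forwarded k x := Vsum (fun z => (start_mass z / lam z)%R%:E * arrive k x z).

Lemma transit_ge0 k x : 0 <= transit k x.
Proof. exact: Vsum_ge0 (arrive_ge0 k x). Qed.

Lemma absorbed_ge0 k x : 0 <= absorbed k x.
Proof. by apply: Vsum_ge0 => z; rewrite mule_ge0 ?arrive_ge0 ?lee_fin ?absorb_rate_ge0. Qed.

Lemma transit0 x : transit 0 x = (mu1 x)%:E.
Proof.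
rewrite /transit (@Vsum_delta _ _ e_enum _ x) => [|z|z xz] /=.
- by rewrite indic_true // mulr1.
- exact: arrive_ge0 0%N x z.
- by rewrite indic_false ?mulr0 // => /esym.
Qed.

Definition load n k x := (q n / lam (src n) * arriveR k x (src n))%R.

Lemma load_ge0 n k x : (0 <= load n k x)%R.
Proof. by rewrite !mulr_ge0 ?invr_ge0 ?lam_ge0 ?arriveR_ge0. Qed.

Lemma transitS k x :
  transit k.+1 x = \sum_(n <oo) (Defs.indic (gam n <> nil) * load n k x)%:E.
Proof.
rewrite /transit /= Vsum_nneseries => [|z n]; last first.
  by rewrite mule_ge0 ?lee_fin ?jump_ge0 ?arrive_ge0.
apply: eq_eseriesr => n _.
rewrite (_ : (fun z => _) = fun z => (Defs.indic (ends_at (gam n) z) * load n k x)%:E).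
  rewrite (Vsum_indic e_enum (load_ge0 n k x)) => [|z1 z2]; last exact: ends_at_uniq.
  by rewrite (propext (ex_ends_at (gam n))).
by apply: funext => z; rewrite arriveRE -EFinM /jump /load; congr EFin; ring.
Qed.

Lemma forwardedE k x :
  forwarded k x = \sum_(n <oo) (Defs.indic (gam n <> nil) * load n k x)%:E.
Proof.
rewrite /forwarded (_ : (fun z => _) = fun z => \sum_(n <oo)
    (Defs.indic (starts_at (gam n) z) * (arriveR k x z / lam z * q n))%:E); last first.
  apply: funext => z; rewrite arriveRE -EFinM.
  have -> : (start_mass z / lam z * arriveR k x z = arriveR k x z / lam z * start_mass z)%R.
    by ring.
  rewrite EFinM start_massE.
  rewrite -nneseriesZl => [|n _]; last exact: qweight_term_ge0.
  by apply: eq_eseriesr => n _; rewrite -EFinM; congr EFin; ring.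
rewrite Vsum_nneseries => [|z n]; last first.
  by rewrite lee_fin !mulr_ge0 ?indic_ge0 ?arriveR_ge0 ?invr_ge0 ?lam_ge0.
apply: eq_eseriesr => n _; have [gam_nil|gam_cons] := pselect (gam n = nil).
  rewrite (@indic_false (gam n <> nil)) ?mul0r; last by move/(_ gam_nil).
  apply: eseries0 => j _ _; rewrite indic_false ?mul0r //.
  by rewrite gam_nil => -[].
rewrite indic_true ?mul1r // (Vsum_indic_at e_enum (z0 := src n)).
- by rewrite /load; congr EFin; ring.
- by move=> z; rewrite !mulr_ge0 ?arriveR_ge0 ?invr_ge0 ?lam_ge0.
- by move=> z1 z2; exact: starts_at_uniq.
- by rewrite /src; case: (gam n) gam_cons => // y l _; exists l.
Qed.

Lemma absorbed_transitS k x : absorbed k x + transit k.+1 x = transit k x.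
Proof.
rewrite transitS -forwardedE /absorbed /forwarded -VsumD => [||z]; first last.
- by rewrite mule_ge0 ?arrive_ge0 // lee_fin divr_ge0 ?start_mass_ge0 ?lam_ge0.
- by move=> z; rewrite mule_ge0 ?arrive_ge0 ?lee_fin ?absorb_rate_ge0.
congr (Vsum _); apply: funext => z.
rewrite /absorb_rate arriveRE -!EFinM -EFinD -mulrDl -mulrDl -lamE.
have [lam0|lam_neq0] := eqVneq (lam z) 0%R; last by rewrite divff // mul1r.
by rewrite arriveR_lam0 // mulr0.
Qed.

Lemma absorbed_partial N x : \sum_(k < N) absorbed k x + transit N x = (mu1 x)%:E.
Proof.
elim: N => [|N IH]; first by rewrite big_ord0 add0e transit0.
by rewrite big_ord_recr /= -addeA absorbed_transitS.
Qed.

Lemma transit_summable x : \sum_(k <oo) transit k x < +oo.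
Proof.
rewrite -Vsum_nneseries => [|z k]; last exact: arrive_ge0.
apply: (@le_lt_trans _ _ (Vsum (fun z => (lam z)%:E))).
  apply: lee_Vsum => z; last exact: arrive_total_le.
  by apply: nneseries_ge0 => k _ _; exact: arrive_ge0.
by apply: le_lt_trans Vsum_lam_le _; rewrite lte_add_pinfty ?ltry.
Qed.

(* What is still in transit after N jumps is summable in N, hence tends to 0. *)
Lemma absorbed_total x : \sum_(k <oo) absorbed k x = (mu1 x)%:E.
Proof.
have absorbed_le : \sum_(k <oo) absorbed k x <= (mu1 x)%:E.
  apply: nneseries_le_of_partial => [k|N]; first exact: absorbed_ge0.
  by rewrite -(absorbed_partial N x) leeDl ?transit_ge0.
have absorbed_fin : \sum_(k <oo) absorbed k x \is a fin_num.
  rewrite ge0_fin_numE; first exact: le_lt_trans absorbed_le (ltry _).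
  by apply: nneseries_ge0 => k _ _; exact: absorbed_ge0.
apply/eqP; rewrite eq_le absorbed_le /= -sube_le0.
apply: (lb_summable_terms_le0 (transit_ge0 ^~ x) (transit_summable x)) => N.
rewrite leeBlDl // -(absorbed_partial N x) leeD2r //.
rewrite -(big_mkord xpredT (absorbed ^~ x)).
by apply: nneseries_lim_ge => k _ _; exact: absorbed_ge0.
Qed.

Definition rho x z := \sum_(k <oo) (absorb_rate z)%:E * arrive k x z.

Lemma rho_ge0 x z : 0 <= rho x z.
Proof.
by apply: nneseries_ge0 => k _ _; rewrite mule_ge0 ?arrive_ge0 ?lee_fin ?absorb_rate_ge0.
Qed.

Lemma rho_row x : Vsum (rho x) = (mu1 x)%:E.
Proof.
rewrite Vsum_nneseries ?absorbed_total // => z k.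
by rewrite mule_ge0 ?arrive_ge0 ?lee_fin ?absorb_rate_ge0.
Qed.

Lemma rho_col_le z : Vsum (rho ^~ z) <= (mu2 z)%:E.
Proof.
rewrite Vsum_nneseries => [|x k]; last first.
  by rewrite mule_ge0 ?arrive_ge0 ?lee_fin ?absorb_rate_ge0.
rewrite (eq_eseriesr (fun k _ => VsumZl e (absorb_rate z) (arrive_ge0 k ^~ z))).
rewrite nneseriesZl => [|k _]; last exact: arrived_ge0.
apply: le_trans (lee_wpmul2l _ (arrived_total_le z)) _.
  by rewrite lee_fin absorb_rate_ge0.
have [lam0|lam_neq0] := eqVneq (lam z) 0%R.
  by rewrite /absorb_rate lam0 invr0 mulr0 mul0e lee_fin.
by rewrite -EFinM /absorb_rate divfK.
Qed.

Lemma rho_col z : Vsum (rho ^~ z) = (mu2 z)%:E.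
Proof.
apply: (Vsum_le_eq e_enum (a := fun z => Vsum (rho ^~ z))) => [y|y||].
- exact: Vsum_ge0 (rho_ge0 ^~ y).
- exact: rho_col_le.
- rewrite mu2_sum -Vsum_comm => [|x y]; last exact: rho_ge0.
  by rewrite (_ : (fun x => _) = fun x => (mu1 x)%:E) ?mu1_sum //; exact/funext/rho_row.
- by rewrite mu2_sum.
Qed.

Lemma rho_fin x z : rho x z \is a fin_num.
Proof.
rewrite ge0_fin_numE ?rho_ge0 //; apply: le_lt_trans (ltry (mu2 z)).
by rewrite -rho_col; exact: Vsum_ge_term (rho_ge0 ^~ z).
Qed.

Lemma arrive_reach k x z : arrive k x z <> 0 -> clos_refl_trans V (EQ Q) x z.
Proof.
elim: k z => [|k IH] z /=.
  have [->|xz] := pselect (x = z); first by move=> _; exact: rt_refl.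
  by rewrite indic_false ?mulr0.
move/eseries_neq0 => [n jump_arrive_neq0].
have jump_neq0 : jump n z <> 0%R by move=> j0; apply: jump_arrive_neq0; rewrite j0 mul0e.
have arrive_neq0 : arrive k x (src n) <> 0.
  by move=> a0; apply: jump_arrive_neq0; rewrite a0 mule0.
have ends_z : ends_at (gam n) z.
  by apply: contrapT => nz; apply: jump_neq0; rewrite /jump indic_false ?mulr0 ?mul0r.
have q_gt0 : (0 < q n)%R.
  rewrite lt_neqAle q_ge0 andbT; apply/eqP => q0.
  by apply: jump_neq0; rewrite /jump -q0 !mul0r.
apply: rt_trans (IH _ arrive_neq0) _.
move: ends_z; rewrite /src; case gam_n: (gam n) => [|s l] /= ends_z.
  by case: ends_z => -[].
apply: (path_edges_clos_refl_trans _ ends_z) => u v uv; rewrite /EQ; apply/RltP.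
apply: lt_le_trans (Q_ge_term u v n); rewrite /Qpath gam_n indic_true // mulr1.
exact: q_gt0.
Qed.

Lemma rho_reach x z : rho x z <> 0 -> clos_refl_trans V (EQ Q) x z.
Proof.
move/eseries_neq0 => [k rho_k_neq0]; apply: (@arrive_reach k) => a0.
by apply: rho_k_neq0; rewrite a0 mule0.
Qed.

Lemma transport_coupling :
  coupling e (fun x z => fine (rho x z)) mu1 mu2 /\
  (forall x z, ~ clos_refl_trans V (EQ Q) x z -> fine (rho x z) = 0%R).
Proof.
have finerho_ge0 x z : (0 <= fine (rho x z))%R by apply: fine_ge0; exact: rho_ge0.
split; [split; [|split]|].
- by move=> x z; apply/RleP.
- move=> x; apply/infinite_sum_nneseriesE => // ; rewrite -rho_row.
  by apply: eq_eseriesr => n _; rewrite fineK ?rho_fin.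
- move=> z; apply/infinite_sum_nneseriesE => //; rewrite -rho_col.
  by apply: eq_eseriesr => n _; rewrite fineK ?rho_fin.
- move=> x z not_reach; have [->//|rho_neq0] := pselect (rho x z = 0).
  by case: not_reach; exact: rho_reach.
Qed.

End MassTransport.

Unset Implicit Arguments.
Open Scope R_scope.

Theorem theorem3p7 (V : Type) (e : nat -> V) (E : V -> V -> Prop)
  (mu1 mu2 : V -> R) (Q : V -> V -> R) :
  enumeration e ->
  is_prob e mu1 -> is_prob e mu2 ->
  is_flow E Q -> finitely_decomposable E Q -> acyclic Q ->
  div_eq e Q mu1 mu2 ->
  exists rho : V -> V -> R,
    coupling e rho mu1 mu2 /\
    (forall x y, ~ clos_refl_trans V (EQ Q) x y -> rho x y = 0).
Proof.
move=> e_enum mu1_prob mu2_prob [Q_ge0 _]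
  [gam [q [q_ge0 [[Sq q_sum] [gam_paths Q_decomp]]]]] _ div_Q.
have gam_NoDup n : NoDup (gam n) by case: (gam_paths n).
have q_ge0' n : (0 <= q n)%R by apply/RleP.
have q_summable : (\sum_(n <oo) (q n)%:E < +oo)%E.
  by rewrite (infinite_sum_nneseries q_ge0 q_sum) ltry.
have Q_decomp' x y : (\sum_(n <oo) (q n * Qpath (gam n) x y)%:E = (Q x y)%:E)%E.
  apply: infinite_sum_nneseries (Q_decomp x y) => n.
  by apply: Rmult_le_pos; [exact: q_ge0|apply/RleP; exact: indic_ge0].
have div_Q' x : exists out inn, Vsum e (fun y => (Q x y)%:E) = out%:E /\
    Vsum e (fun y => (Q y x)%:E) = inn%:E /\ (out - inn = mu1 x - mu2 x)%R.
  have [out [inn [Hout [Hin Hdiv]]]] := div_Q x.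
  exists out, inn; rewrite /Vsum (infinite_sum_nneseries (fun n => Q_ge0 x (e n)) Hout).
  by rewrite (infinite_sum_nneseries (fun n => Q_ge0 (e n) x) Hin).
have prob_ge0 (mu : V -> R) : is_prob e mu -> forall x, (0 <= mu x)%R.
  by move=> [mu_ge0 _] x; apply/RleP.
have prob_sum (mu : V -> R) : is_prob e mu -> Vsum e (fun x => (mu x)%:E) = 1%E.
  by move=> [mu_ge0 mu_sum]; exact: infinite_sum_nneseries (fun n => mu_ge0 (e n)) mu_sum.
eexists; exact: (transport_coupling e_enum (prob_ge0 _ mu1_prob) (prob_ge0 _ mu2_prob)
  (prob_sum _ mu1_prob) (prob_sum _ mu2_prob) q_ge0' q_summable gam_NoDup Q_decomp' div_Q').
Qed.
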